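(* Let $\mathcal P$ be a Fitting program over a bilattice $\mathcal B$ and $\alpha\in\{\mathcal F,\mathcal T,\mathcal U,\mathcal I\}$. Then the operator $\Psi'^{\alpha}_{\mathcal P}:\mathcal V(\mathcal B)\to\mathcal V(\mathcal B)$ is monotonic under $\le_k$ and anti-monotonic under $\le_t$.
   Context: A bilattice $\langle\mathcal B,\le_t,\le_k\rangle$ is a nonempty set with two partial orders, each making $\mathcal B$ a lattice with top and bottom. Under $\le_t$, meet and join are $\wedge,\vee$ (infinitary $\bigwedge,\bigvee$), bottom $\mathcal F$, top $\mathcal T$; under $\le_k$, meet and join are $\otimes,\oplus$ (infinitary $\bigotimes,\bigoplus$), bottom $\mathcal U$, top $\mathcal I$. Standing assumptions: $\mathcal B$ is complete for both orders, infinitely distributive, satisfies the infinitary interlacing conditions (each of $\wedge,\vee,\otimes,\oplus$ and their infinitary versions is monotone with respect to both orderings), and has a negation $\neg$ (an involution reversing $\le_t$ and preserving $\le_k$). A formula is built from literals ($A$ or $\neg A$, $A$ an atom) and elements of $\mathcal B$ using $\wedge,\vee,\otimes,\oplus,\exists,\forall$ (with a built-in predicate $equal$). A clause is $P(x_1,\dots,x_n)\leftarrow\phi(x_1,\dots,x_n)$ with the body's free variables among $x_1,\dots,x_n$. A Fitting program is a finite set of clauses with no predicate letter heading more than one clause; Inst-$\mathcal P$ is the set of ground instances. $\mathcal V(\mathcal B)$ is the set of maps from ground atoms to $\mathcal B$ with pointwise orders and operations. Valuations extend to closed formulas compositionally ($v(\beta)=\beta$ for $\beta\in\mathcal B$,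 connectives pointwise, $\exists$ as $\bigvee$ and $\forall$ as $\bigwedge$ over closed-term instances, $v(equal(s,t))=\mathcal T$ if $s=t$ else $\mathcal F$). The contrajoin $v\bigtriangleup w$ evaluates closed formulas likewise except that positive literals $A$ get $v(A)$ and negative literals $\neg A$ get $\neg w(A)$. $\Psi_{\mathcal P}^{\alpha}(v,w)(A)=\alpha$ if $A$ heads no member of Inst-$\mathcal P$, and $=(v\bigtriangleup w)(B)$ if $A\leftarrow B\in$ Inst-$\mathcal P$. Let $v_\alpha$ be the constant valuation with value $\alpha$. For $v\in\mathcal V(\mathcal B)$, $\Psi'^{\alpha}_{\mathcal P}(v)$ is the limit of the transfinite sequence $a_0=v_\alpha$, $a_{n+1}=\Psi_{\mathcal P}^{\alpha}(a_n,v)$, and for limit ordinals $\lambda$, $a_\lambda=\bigvee_{n<\lambda}\Psi_{\mathcal P}^{\alpha}(a_n,v)$ if $\alpha=\mathcal F$, $\bigwedge_{n<\lambda}$ if $\alpha=\mathcal T$, $\bigoplus_{n<\lambda}$ if $\alpha=\mathcal U$, $\bigotimes_{n<\lambda}$ if $\alpha=\mathcal I$. Equivalently, $\Psi'^{\alpha}_{\mathcal P}(v)$ is the $\le_t$-least (resp. $\le_t$-greatest, $\le_k$-least, $\le_k$-greatest) fixpoint of $x\mapsto\Psi_{\mathcal P}^{\alpha}(x,v)$ for $\alpha=\mathcal F$ (resp. $\mathcal T,\mathcal U,\mathcal I$). *)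

From Stdlib Require Import List Classical ClassicalEpsilon.
Import ListNotations.

Definition classicb (P : Prop) : bool :=
  if excluded_middle_informative P then true else false.

(** The four (infinitary) operations: t-meet (/\), t-join (\/),
    k-meet (otimes), k-join (oplus). *)
Inductive bop := Tmeet | Tjoin | Kmeet | Kjoin.

Record bilattice := Bilattice {
  bcar : Type;
  le_t : bcar -> bcar -> Prop;
  le_k : bcar -> bcar -> Prop;
  bigmeet_t : (bcar -> Prop) -> bcar;
  bigjoin_t : (bcar -> Prop) -> bcar;
  bigmeet_k : (bcar -> Prop) -> bcar;
  bigjoin_k : (bcar -> Prop) -> bcar;
  bneg : bcar -> bcar }.

Definition big (B : bilattice) (o : bop) : (bcar B -> Prop) -> bcar B :=
  match o with
  | Tmeet => bigmeet_t B | Tjoin => bigjoin_t B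
  | Kmeet => bigmeet_k B | Kjoin => bigjoin_k B end.

Definition pairset {T : Type} (a b : T) : T -> Prop := fun x => x = a \/ x = b.
Definition emptyset {T : Type} : T -> Prop := fun _ => False.
Definition image {I T : Type} (f : I -> T) : T -> Prop := fun x => exists i, f i = x.

Definition bin (B : bilattice) (o : bop) (a b : bcar B) : bcar B := big B o (pairset a b).

Definition bF (B : bilattice) : bcar B := bigjoin_t B emptyset.
Definition bT (B : bilattice) : bcar B := bigmeet_t B emptyset.
Definition bU (B : bilattice) : bcar B := bigjoin_k B emptyset.
Definition bI (B : bilattice) : bcar B := bigmeet_k B emptyset.

Definition partial_order {T : Type} (le : T -> T -> Prop) : Prop :=
  (forall a, le a a) /\ (forall a b, le a b -> le b a -> a = b) /\
  (forall a b c, le a b -> le b c -> le a c).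

Definition is_lub {T : Type} (le : T -> T -> Prop) (S : T -> Prop) (x : T) : Prop :=
  (forall y, S y -> le y x) /\ (forall z, (forall y, S y -> le y z) -> le x z).
Definition is_glb {T : Type} (le : T -> T -> Prop) (S : T -> Prop) (x : T) : Prop :=
  (forall y, S y -> le x y) /\ (forall z, (forall y, S y -> le z y) -> le z x).

Record bilattice_axioms (B : bilattice) : Prop := {
  ax_po_t : partial_order (le_t B);
  ax_po_k : partial_order (le_k B);
  ax_meet_t : forall S, is_glb (le_t B) S (bigmeet_t B S);
  ax_join_t : forall S, is_lub (le_t B) S (bigjoin_t B S);
  ax_meet_k : forall S, is_glb (le_k B) S (bigmeet_k B S);
  ax_join_k : forall S, is_lub (le_k B) S (bigjoin_k B S);
  ax_distr : forall (o1 o2 : bop) (a : bcar B) (S : bcar B -> Prop),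
      o1 <> o2 -> (exists s, S s) ->
      bin B o1 a (big B o2 S) = big B o2 (fun y => exists s, S s /\ y = bin B o1 a s);
  ax_interlace_t : forall o a a' b b', le_t B a a' -> le_t B b b' ->
      le_t B (bin B o a b) (bin B o a' b');
  ax_interlace_k : forall o a a' b b', le_k B a a' -> le_k B b b' ->
      le_k B (bin B o a b) (bin B o a' b');
  ax_big_interlace_t : forall o (I : Type) (f g : I -> bcar B),
      (forall i, le_t B (f i) (g i)) -> le_t B (big B o (image f)) (big B o (image g));
  ax_big_interlace_k : forall o (I : Type) (f g : I -> bcar B),
      (forall i, le_k B (f i) (g i)) -> le_k B (big B o (image f)) (big B o (image g));
  ax_neg_invol : forall a, bneg B (bneg B a) = a;
  ax_neg_t : forall a b, le_t B a b -> le_t B (bneg B b) (bneg B a);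
  ax_neg_k : forall a b, le_k B a b -> le_k B (bneg B a) (bneg B b) }.

Record signature := Signature {
  fsym : Type; farity : fsym -> nat;
  psym : Type; parity : psym -> nat }.

Inductive term (F : Type) : Type :=
| Var (x : nat)
| App (f : F) (ts : list (term F)).
Arguments Var {F} x.
Arguments App {F} f ts.

Fixpoint wf_term (S : signature) (t : term (fsym S)) : Prop :=
  match t with
  | Var _ => True
  | App f ts => length ts = farity S f /\
      (fix all (l : list (term (fsym S))) : Prop :=
         match l with [] => True | u :: l' => wf_term S u /\ all l' end) ts
  end.

Fixpoint ground (S : signature) (t : term (fsym S)) : Prop :=
  match t with
  | Var _ => False
  | App f ts => length ts = farity S f /\
      (fix all (l : list (term (fsym S))) : Prop :=
         match l with [] => True | u :: l' => ground S u /\ all l' end) ts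
  end.

Record gatom (S : signature) := GAtom {
  ga_pred : psym S;
  ga_args : list (term (fsym S));
  ga_wf : length ga_args = parity S ga_pred /\ Forall (ground S) ga_args }.
Arguments ga_pred {S} _.
Arguments ga_args {S} _.

Definition valuation (S : signature) (B : bilattice) := gatom S -> bcar B.

Definition vle_t {S B} (v w : valuation S B) : Prop := forall A, le_t B (v A) (w A).
Definition vle_k {S B} (v w : valuation S B) : Prop := forall A, le_k B (v A) (w A).

(** Formulas. [FNeqLit] is the negative literal of the built-in [equal]. *)
Inductive formula (S : signature) (B : bilattice) : Type :=
| FPos (p : psym S) (ts : list (term (fsym S)))
| FNeg (p : psym S) (ts : list (term (fsym S)))
| FConst (b : bcar B)
| FAnd (phi psi : formula S B)
| FOr (phi psi : formula S B)
| FOtimes (phi psi : formula S B)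
| FOplus (phi psi : formula S B)
| FEx (x : nat) (phi : formula S B)
| FAll (x : nat) (phi : formula S B)
| FEq (s t : term (fsym S))
| FNeqLit (s t : term (fsym S)).
Arguments FPos {S B}. Arguments FNeg {S B}. Arguments FConst {S B}.
Arguments FAnd {S B}. Arguments FOr {S B}. Arguments FOtimes {S B}.
Arguments FOplus {S B}. Arguments FEx {S B}. Arguments FAll {S B}.
Arguments FEq {S B}. Arguments FNeqLit {S B}.

Fixpoint term_vars {F : Type} (t : term F) : list nat :=
  match t with
  | Var x => [x]
  | App _ ts => (fix vs (l : list (term F)) : list nat :=
                   match l with [] => [] | u :: l' => term_vars u ++ vs l' end) ts
  end.

Fixpoint free_in {S B} (x : nat) (phi : formula S B) : Prop :=
  match phi with
  | FPos _ ts | FNeg _ ts => exists t, In t ts /\ In x (term_vars t)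
  | FConst _ => False
  | FAnd a b | FOr a b | FOtimes a b | FOplus a b => free_in x a \/ free_in x b
  | FEx y a | FAll y a => x <> y /\ free_in x a
  | FEq s t | FNeqLit s t => In x (term_vars s) \/ In x (term_vars t)
  end.

Fixpoint wf_formula {S B} (phi : formula S B) : Prop :=
  match phi with
  | FPos p ts | FNeg p ts => length ts = parity S p /\ Forall (wf_term S) ts
  | FConst _ => True
  | FAnd a b | FOr a b | FOtimes a b | FOplus a b => wf_formula a /\ wf_formula b
  | FEx _ a | FAll _ a => wf_formula a
  | FEq s t | FNeqLit s t => wf_term S s /\ wf_term S t
  end.

Record clause (S : signature) (B : bilattice) := Clause {
  c_head : psym S;
  c_params : list nat;
  c_body : formula S B }.
Arguments c_head {S B} _. Arguments c_params {S B} _. Arguments c_body {S B} _.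

Definition wf_clause {S B} (c : clause S B) : Prop :=
  length (c_params c) = parity S (c_head c) /\ NoDup (c_params c) /\
  wf_formula (c_body c) /\ (forall x, free_in x (c_body c) -> In x (c_params c)).

Definition program (S : signature) (B : bilattice) := list (clause S B).

Definition fitting_program {S B} (P : program S B) : Prop :=
  Forall wf_clause P /\ NoDup (map c_head P).

Fixpoint inst {F : Type} (rho : nat -> term F) (t : term F) : term F :=
  match t with
  | Var x => rho x
  | App f ts => App f ((fix im (l : list (term F)) : list (term F) :=
                          match l with [] => [] | u :: l' => inst rho u :: im l' end) ts)
  end.

Definition upd {F : Type} (rho : nat -> term F) (x : nat) (t : term F) : nat -> term F :=
  fun y => if Nat.eqb y x then t else rho y.

Definition atom_val {S B} (v : valuation S B) (p : psym S) (us : list (term (fsym S)))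
  : bcar B :=
  match excluded_middle_informative
          (length us = parity S p /\ Forall (ground S) us) with
  | left H => v (GAtom S p us H)
  | right _ => bF B   (* never reached for well-formed closed formulas *)
  end.

Definition eq_val {S B} (s t : term (fsym S)) : bcar B :=
  if excluded_middle_informative (s = t) then bT B else bF B.

(** [contra v w rho phi] is the contrajoin (v /\triangle w) evaluated at the
    closed formula phi[rho] (rho is the simultaneous substitution applied). *)
Fixpoint contra {S B} (v w : valuation S B) (rho : nat -> term (fsym S))
    (phi : formula S B) : bcar B :=
  match phi with
  | FPos p ts => atom_val v p (map (inst rho) ts)
  | FNeg p ts => bneg B (atom_val w p (map (inst rho) ts))
  | FConst b => b
  | FAnd a b => bin B Tmeet (contra v w rho a) (contra v w rho b)
  | FOr a b => bin B Tjoin (contra v w rho a) (contra v w rho b)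
  | FOtimes a b => bin B Kmeet (contra v w rho a) (contra v w rho b)
  | FOplus a b => bin B Kjoin (contra v w rho a) (contra v w rho b)
  | FEx x a => bigjoin_t B (fun y => exists t, ground S t /\ y = contra v w (upd rho x t) a)
  | FAll x a => bigmeet_t B (fun y => exists t, ground S t /\ y = contra v w (upd rho x t) a)
  | FEq s t => eq_val (inst rho s) (inst rho t)
  | FNeqLit s t => bneg B (eq_val (inst rho s) (inst rho t))
  end.

Fixpoint bind {F : Type} (xs : list nat) (ts : list (term F)) : nat -> term F :=
  match xs, ts with
  | x :: xs', t :: ts' => fun y => if Nat.eqb y x then t else bind xs' ts' y
  | _, _ => Var
  end.

Definition Psi {S B} (P : program S B) (alpha : bcar B) (v w : valuation S B)
  : valuation S B :=
  fun A =>
    match find (fun c => classicb (c_head c = ga_pred A)) P with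
    | Some c => contra v w (bind (c_params c) (ga_args A)) (c_body c)
    | None => alpha
    end.

Inductive mode := mF | mT | mU | mI.

Definition alpha_of (B : bilattice) (m : mode) : bcar B :=
  match m with mF => bF B | mT => bT B | mU => bU B | mI => bI B end.

Definition extremal_fixpoint {S B} (m : mode) (f : valuation S B -> valuation S B)
  (x : valuation S B) : Prop :=
  (forall A, f x A = x A) /\
  forall y, (forall A, f y A = y A) ->
    match m with
    | mF => vle_t x y | mT => vle_t y x
    | mU => vle_k x y | mI => vle_k y x end.

Definition Psi' {S B} (P : program S B) (m : mode) (v : valuation S B) : valuation S B :=
  epsilon (inhabits (fun _ => alpha_of B m))
    (extremal_fixpoint m (fun x => Psi P (alpha_of B m) x v)).

(* Psi'^alpha(v) is the least fixpoint of x |-> Psi^alpha(x, v) for the order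
   <=_alpha, which is <=_t, >=_t, <=_k or >=_k for alpha = F, T, U, I.  By
   interlacing, Psi is monotone in its first argument for <=_alpha, monotone
   in both arguments for <=_k, and monotone/antitone in its arguments for
   <=_t.  The theorem then follows from a general transfer principle: if a
   relation R is preserved by arbitrary joins and R a b implies R (f a) (g b),
   then R relates the least fixpoints of f and g.  This is proved by
   iterating f and g in lockstep from the bottom. *)

From Stdlib Require Import FunctionalExtensionality PropExtensionality ClassicalEpsilon.

Definition is_least_fixpoint {V : Type} (le : V -> V -> Prop) (h : V -> V) (x : V) : Prop :=
  h x = x /\ forall z, h z = z -> le x z.

Section LeastFixpointTransfer.

Variables (V : Type) (le : V -> V -> Prop) (join : forall I : Type, (I -> V) -> V).
Hypothesis le_refl : forall a, le a a.
Hypothesis le_antisym : forall a b, le a b -> le b a -> a = b.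
Hypothesis le_trans : forall a b c, le a b -> le b c -> le a c.
Hypothesis join_ub : forall I (x : I -> V) i, le (x i) (join I x).
Hypothesis join_least : forall I (x : I -> V) z, (forall i, le (x i) z) -> le (join I x) z.

Lemma prefixpoint_least_fixpoint (h : V -> V) (x : V) :
  (forall a b, le a b -> le (h a) (h b)) ->
  le (h x) x -> (forall z, le (h z) z -> le x z) -> is_least_fixpoint le h x.
Proof.
  intros h_mono Hx Hleast.
  assert (Hfix : h x = x).
  { apply le_antisym; [exact Hx |]. apply Hleast, h_mono, Hx. }
  split; [exact Hfix |].
  intros z Hz; apply Hleast; rewrite Hz; apply le_refl.
Qed.

Variables (cmp : V -> V -> Prop) (f g : V -> V).
Hypothesis cmp_join :
  forall I (x y : I -> V), (forall i, cmp (x i) (y i)) -> cmp (join I x) (join I y).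
Hypothesis f_mono : forall a b, le a b -> le (f a) (f b).
Hypothesis g_mono : forall a b, le a b -> le (g a) (g b).
Hypothesis cmp_step : forall a b, cmp a b -> cmp (f a) (g b).

(* The pairs of stages reached by transfinite iteration of f and g in
   lockstep; closure under joins plays the role of the limit stages. *)
Inductive lockstep : V -> V -> Prop :=
| lockstep_step a b : lockstep a b -> lockstep (f a) (g b)
| lockstep_join I (x y : I -> V) :
    (forall i, lockstep (x i) (y i)) -> lockstep (join I x) (join I y).

Lemma lockstep_cmp a b : lockstep a b -> cmp a b.
Proof. induction 1; auto. Qed.

Lemma lockstep_below_prefixpoints a b : lockstep a b ->
  (forall z, le (f z) z -> le a z) /\ (forall z, le (g z) z -> le b z).
Proof.
  induction 1 as [a b _ [IHa IHb] | I x y _ IH].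
  - split; intros z Hz.
    + apply le_trans with (f z); [apply f_mono, IHa |]; exact Hz.
    + apply le_trans with (g z); [apply g_mono, IHb |]; exact Hz.
  - split; intros z Hz; apply join_least; intro i; apply (IH i), Hz.
Qed.

Definition lockstep_pair := { p : V * V | lockstep (fst p) (snd p) }.

Definition lockstep_fst : V := join lockstep_pair (fun p => fst (proj1_sig p)).
Definition lockstep_snd : V := join lockstep_pair (fun p => snd (proj1_sig p)).

Lemma lockstep_limit : lockstep lockstep_fst lockstep_snd.
Proof. apply lockstep_join; intros [p Hp]; exact Hp. Qed.

Theorem least_fixpoints_related : exists X Y,
  is_least_fixpoint le f X /\ is_least_fixpoint le g Y /\ cmp X Y.
Proof.
  pose (next := exist (fun p : V * V => lockstep (fst p) (snd p))
                  (f lockstep_fst, g lockstep_snd) (lockstep_step _ _ lockstep_limit)).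
  destruct (lockstep_below_prefixpoints _ _ lockstep_limit) as [Hfst Hsnd].
  exists lockstep_fst, lockstep_snd; split; [| split].
  - apply prefixpoint_least_fixpoint; [exact f_mono | | exact Hfst].
    exact (join_ub _ (fun p : lockstep_pair => fst (proj1_sig p)) next).
  - apply prefixpoint_least_fixpoint; [exact g_mono | | exact Hsnd].
    exact (join_ub _ (fun p : lockstep_pair => snd (proj1_sig p)) next).
  - exact (lockstep_cmp _ _ lockstep_limit).
Qed.

End LeastFixpointTransfer.

Section ContrajoinMonotone.

Variables (S : signature) (B : bilattice) (le : bcar B -> bcar B -> Prop).
Hypothesis le_refl : forall a, le a a.
Hypothesis bin_mono : forall o a a' b b', le a a' -> le b b' -> le (bin B o a b) (bin B o a' b').
Hypothesis big_mono : forall o (I : Type) (x y : I -> bcar B),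
  (forall i, le (x i) (y i)) -> le (big B o (image x)) (big B o (image y)).

Lemma ground_instances_image (h : term (fsym S) -> bcar B) :
  (fun y => exists t, ground S t /\ y = h t) =
  image (fun t : sig (ground S) => h (proj1_sig t)).
Proof.
  apply functional_extensionality; intro y; apply propositional_extensionality.
  split.
  - intros [t [Ht ->]]; exists (exist _ t Ht); reflexivity.
  - intros [[t Ht] <-]; exists t; auto.
Qed.

Variables v v' w w' : valuation S B.
Hypothesis v_le : forall A, le (v A) (v' A).
Hypothesis neg_w_le : forall A, le (bneg B (w A)) (bneg B (w' A)).

Lemma contra_mono (phi : formula S B) : forall rho,
  le (contra v w rho phi) (contra v' w' rho phi).
Proof.
  induction phi; intro rho; cbn [contra]; auto.
  - unfold atom_val; destruct excluded_middle_informative; auto.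
  - unfold atom_val; destruct excluded_middle_informative; auto.
  - rewrite !ground_instances_image.
    apply (big_mono Tjoin); intros [t Ht]; auto.
  - rewrite !ground_instances_image.
    apply (big_mono Tmeet); intros [t Ht]; auto.
Qed.

Lemma Psi_mono (P : program S B) (alpha : bcar B) A :
  le (Psi P alpha v w A) (Psi P alpha v' w' A).
Proof. unfold Psi; destruct (List.find _ P); auto using contra_mono. Qed.

End ContrajoinMonotone.

Section FixpointOperator.

Variables (S : signature) (B : bilattice).
Hypothesis HB : bilattice_axioms B.

Lemma le_t_refl a : le_t B a a.
Proof. apply (ax_po_t B HB). Qed.

Lemma le_k_refl a : le_k B a a.
Proof. apply (ax_po_k B HB). Qed.

Lemma Psi_mono_k (P : program S B) alpha (v v' w w' : valuation S B) :
  vle_k v v' -> vle_k w w' -> vle_k (Psi P alpha v w) (Psi P alpha v' w').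
Proof.
  intros Hv Hw A; apply Psi_mono; auto using le_k_refl.
  - apply (ax_interlace_k B HB).
  - apply (ax_big_interlace_k B HB).
  - intro; apply (ax_neg_k B HB), Hw.
Qed.

Lemma Psi_mono_t (P : program S B) alpha (v v' w w' : valuation S B) :
  vle_t v v' -> vle_t w' w -> vle_t (Psi P alpha v w) (Psi P alpha v' w').
Proof.
  intros Hv Hw A; apply Psi_mono; auto using le_t_refl.
  - apply (ax_interlace_t B HB).
  - apply (ax_big_interlace_t B HB).
  - intro; apply (ax_neg_t B HB), Hw.
Qed.

Definition vbig (o : bop) (I : Type) (x : I -> valuation S B) : valuation S B :=
  fun A => big B o (image (fun i => x i A)).

Lemma vbig_mono_k o I (x y : I -> valuation S B) :
  (forall i, vle_k (x i) (y i)) -> vle_k (vbig o I x) (vbig o I y).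
Proof. intros H A; apply (ax_big_interlace_k B HB); intro i; apply H. Qed.

Lemma vbig_mono_t o I (x y : I -> valuation S B) :
  (forall i, vle_t (x i) (y i)) -> vle_t (vbig o I x) (vbig o I y).
Proof. intros H A; apply (ax_big_interlace_t B HB); intro i; apply H. Qed.

(* The order in which Psi'^alpha is a least fixpoint. *)
Definition mode_le (m : mode) (x y : valuation S B) : Prop :=
  match m with mF => vle_t x y | mT => vle_t y x | mU => vle_k x y | mI => vle_k y x end.

Definition mode_op (m : mode) : bop :=
  match m with mF => Tjoin | mT => Tmeet | mU => Kjoin | mI => Kmeet end.

Lemma mode_le_refl m x : mode_le m x x.
Proof. destruct m; intro A; auto using le_t_refl, le_k_refl. Qed.

Lemma mode_le_trans m x y z : mode_le m x y -> mode_le m y z -> mode_le m x z.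
Proof.
  destruct (ax_po_t B HB) as [_ [_ trans_t]]; destruct (ax_po_k B HB) as [_ [_ trans_k]].
  destruct m; intros Hxy Hyz A; eauto.
Qed.

Lemma mode_le_antisym m x y : mode_le m x y -> mode_le m y x -> x = y.
Proof.
  destruct (ax_po_t B HB) as [_ [anti_t _]]; destruct (ax_po_k B HB) as [_ [anti_k _]].
  intros Hxy Hyx; apply functional_extensionality; intro A.
  destruct m; auto.
Qed.

Lemma mode_join_ub m I (x : I -> valuation S B) i :
  mode_le m (x i) (vbig (mode_op m) I x).
Proof.
  destruct m; intro A;
    [apply (ax_join_t B HB) | apply (ax_meet_t B HB)
    | apply (ax_join_k B HB) | apply (ax_meet_k B HB)];
    exists i; reflexivity.
Qed.

Lemma mode_join_least m I (x : I -> valuation S B) z :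
  (forall i, mode_le m (x i) z) -> mode_le m (vbig (mode_op m) I x) z.
Proof.
  destruct m; intros H A.
  - apply (ax_join_t B HB); intros y [i <-]; apply H.
  - apply (ax_meet_t B HB); intros y [i <-]; apply H.
  - apply (ax_join_k B HB); intros y [i <-]; apply H.
  - apply (ax_meet_k B HB); intros y [i <-]; apply H.
Qed.

Lemma Psi_mode_mono (P : program S B) m (v x y : valuation S B) :
  mode_le m x y ->
  mode_le m (Psi P (alpha_of B m) x v) (Psi P (alpha_of B m) y v).
Proof.
  destruct m; intro Hxy.
  - apply Psi_mono_t; [exact Hxy | intro; apply le_t_refl].
  - apply Psi_mono_t; [exact Hxy | intro; apply le_t_refl].
  - apply Psi_mono_k; [exact Hxy | intro; apply le_k_refl].
  - apply Psi_mono_k; [exact Hxy | intro; apply le_k_refl].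
Qed.

Lemma least_fixpoint_extremal m (h : valuation S B -> valuation S B) x :
  is_least_fixpoint (mode_le m) h x -> extremal_fixpoint m h x.
Proof.
  intros [Hfix Hleast]; split.
  - intro A; rewrite Hfix; reflexivity.
  - intros y Hy; apply (Hleast y), functional_extensionality, Hy.
Qed.

Lemma extremal_fixpoint_le m (h : valuation S B -> valuation S B) x y :
  extremal_fixpoint m h x -> extremal_fixpoint m h y -> mode_le m x y.
Proof. intros [_ Hx] [Hy _]; exact (Hx y Hy). Qed.

Lemma Psi'_eq (P : program S B) m (v x : valuation S B) :
  extremal_fixpoint m (fun y => Psi P (alpha_of B m) y v) x -> Psi' P m v = x.
Proof.
  intro Hx; unfold Psi'.
  match goal with |- epsilon ?i ?Q = _ =>
    pose proof (epsilon_spec i Q (ex_intro _ x Hx)) as He end.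
  apply (mode_le_antisym m); eapply extremal_fixpoint_le; eassumption.
Qed.

Lemma Psi'_related (P : program S B) m (cmp : valuation S B -> valuation S B -> Prop)
  (v w : valuation S B) :
  (forall I x y, (forall i, cmp (x i) (y i)) ->
     cmp (vbig (mode_op m) I x) (vbig (mode_op m) I y)) ->
  (forall x y, cmp x y -> cmp (Psi P (alpha_of B m) x v) (Psi P (alpha_of B m) y w)) ->
  cmp (Psi' P m v) (Psi' P m w).
Proof.
  intros cmp_join cmp_step.
  destruct (least_fixpoints_related _ (mode_le m) (vbig (mode_op m))
              (mode_le_refl m) (mode_le_antisym m) (mode_le_trans m)
              (mode_join_ub m) (mode_join_least m) cmp _ _ cmp_join
              (Psi_mode_mono P m v) (Psi_mode_mono P m w) cmp_step)
    as [X [Y [HX [HY HXY]]]].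
  rewrite (Psi'_eq P m v X), (Psi'_eq P m w Y); auto using least_fixpoint_extremal.
Qed.

End FixpointOperator.

Theorem theorem1 (S : signature) (B : bilattice) (HB : bilattice_axioms B)
  (P : program S B) (HP : fitting_program P) (m : mode) :
  (forall v w : valuation S B, vle_k v w -> vle_k (Psi' P m v) (Psi' P m w)) /\
  (forall v w : valuation S B, vle_t v w -> vle_t (Psi' P m w) (Psi' P m v)).
Proof.
  split; intros v w Hvw; apply Psi'_related; auto using vbig_mono_k, vbig_mono_t.
  - intros x y Hxy; apply Psi_mono_k; assumption.
  - intros x y Hxy; apply Psi_mono_t; assumption.
Qed.
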